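(* Let $d\ge 2$ be even and let $\mathcal{D}$ be the distribution on $\mathbb{R}^d\times\{\pm1\}$ given by: $y\in\{+1,-1\}$ with probability $1/2$ each, an index $j^*$ chosen uniformly at random from $\{1,\dots,d/2\}$, and $x=y\,e_{j^*}$, where $e_i$ denotes the $i$-th standard basis vector of $\mathbb{R}^d$; write $j^*(x)$ for this index. Define the probability distribution $$\tilde\nu=\frac{1}{d}\sum_{i=1}^{d/2}\left(\delta_{\theta_i}+\delta_{\theta'_i}\right)$$ on $\mathbb{R}\times\mathbb{R}^d\times\mathbb{R}$, where $\theta_i=\left(\frac{1}{\sqrt2},\frac{3}{\sqrt{20}}e_i,\frac{-1}{\sqrt{20}}\right)$ and $\theta'_i=\left(\frac{-1}{\sqrt2},\frac{-3}{\sqrt{20}}e_i,\frac{-1}{\sqrt{20}}\right)$. Then for every $(x,y)$ in the support of $\mathcal{D}$, $\nabla_x\mathcal{L}(\tilde\nu,(x,y)) = c\cdot e_{j^*(x)}$ for some constant $c\neq 0$.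
   Context: For a probability distribution $\nu$ over parameters $(w,r,b)\in\mathbb{R}\times\mathbb{R}^d\times\mathbb{R}$, the network output is $f(\nu,x)=\mathbb{E}_{(w,r,b)\sim\nu}[w\,\phi(\langle r,x\rangle+b)]$ with $\phi(t)=\max(t,0)$, and the cross-entropy loss is $\mathcal{L}(\nu,(x,y))=\log(1+\exp(-y f(\nu,x)))$. $\delta_\theta$ is the point mass at $\theta$, and $\nabla_x\mathcal{L}$ is the gradient of the loss with respect to the input $x$. *)

From HB Require Import structures.
From mathcomp Require Import all_boot all_order all_algebra.
From mathcomp Require Import all_classical all_reals all_analysis.
Set Implicit Arguments. Unset Strict Implicit. Unset Printing Implicit Defensive.
Import Order.TTheory GRing.Theory Num.Theory.
Import numFieldNormedType.Exports.
Local Open Scope ring_scope.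

Section Defs.
Variables (R : realType) (d : nat).

Definition relu (t : R) : R := Num.max t 0.

Definition ebasis (k : 'I_d) : 'rV[R]_d := delta_mx 0 k.

Definition inner (u v : 'rV[R]_d) : R := \sum_(k < d) u 0 k * v 0 k.

Definition param := (R * 'rV[R]_d * R)%type.

(* a finitely supported probability distribution over parameters, given as a
   list of (weight, atom) pairs; E_nu[g] = \sum weight * g atom *)
Definition fdist := seq (R * param).

Definition unit_neuron (th : param) (x : 'rV[R]_d) : R :=
  th.1.1 * relu (inner th.1.2 x + th.2).

Definition netout (nu : fdist) (x : 'rV[R]_d) : R :=
  \sum_(p <- nu) p.1 * unit_neuron p.2 x.

Definition ce_loss (nu : fdist) (x : 'rV[R]_d) (y : R) : R :=
  ln (1 + expR (- (y * netout nu x))).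

Definition gradient (f : 'rV[R]_d -> R) (x : 'rV[R]_d) : 'rV[R]_d :=
  \row_k ('d f x) (ebasis k).

Definition theta (i : 'I_d) : param :=
  (1 / Num.sqrt 2, (3 / Num.sqrt 20) *: ebasis i, -1 / Num.sqrt 20).
Definition theta' (i : 'I_d) : param :=
  (-1 / Num.sqrt 2, (-3 / Num.sqrt 20) *: ebasis i, -1 / Num.sqrt 20).

(* the indices {1,...,d/2}, i.e. 0-based ordinals i < d/2 *)
Definition half_idx : seq 'I_d := [seq i <- enum 'I_d | (nat_of_ord i < d./2)%N].

Definition nu_tilde : fdist :=
  flatten [seq [:: (1 / d%:R, theta i); (1 / d%:R, theta' i)] | i <- half_idx].

End Defs.

From HB Require Import structures.
From mathcomp Require Import all_boot all_order all_algebra.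
From mathcomp Require Import all_classical all_reals all_analysis.
From mathcomp Require Import ring lra.
Set Implicit Arguments. Unset Strict Implicit. Unset Printing Implicit Defensive.
Import Order.TTheory GRing.Theory Num.Theory.
Import numFieldNormedType.Exports.
Local Open Scope ring_scope.

(* Near x = y e_j every coordinate z_k with k <> j lies in (-1/3, 1/3), where
   both neurons of the pair (theta_k, theta'_k) are inactive, while at
   coordinate j exactly one neuron of the pair is active.  So on a
   neighbourhood of x the network output is the affine function
   (3 z_j - y) / (d sqrt 2 sqrt 20) of z_j alone, the loss is a softplus of an
   affine function of z_j, and its gradient is the derivative of that softplus,
   which never vanishes, times e_j. *)

Section NearEqDifferentiable.
Variables (R : numFieldType) (V W : normedModType R).

Lemma near_eq_diff_expansion (f g : V -> W) (x : V) :
  (\forall z \near x, f z = g z) -> differentiable g x ->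
  f \o shift x = cst (f x) + 'd g x +o_ 0 id.
Proof.
move=> fg dg; rewrite (nbhs_singleton fg).
apply/eqaddoP => _/posnumP[e].
have /eqaddoP/(_ e%:num (gt0 e)) gexp := diff_locally dg.
rewrite (near_shift 0) in fg; near=> h.
have fgh : f (h + x) = g (h + x).
  by near: h; apply: filterS fg => z /=; rewrite subr0 addrC.
rewrite !fctE /= fgh.
by near: h; exact: gexp.
Unshelve. all: by end_near. Qed.

Lemma near_eq_differentiable (f g : V -> W) (x : V) :
  (\forall z \near x, f z = g z) -> differentiable g x ->
  differentiable f x /\ 'd f x = 'd g x :> (V -> W).
Proof.
move=> fg dg; have expand := near_eq_diff_expansion fg dg.
have dfg : 'd f x = 'd g x :> (V -> W).
  exact: diff_unique (diff_continuous dg) expand.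
split; last exact: dfg.
by apply/diff_locallyP; rewrite dfg; split; [exact: diff_continuous|].
Qed.

End NearEqDifferentiable.

Section CoordinateGradient.
Variables (R : realType) (d : nat).

Definition row_coord (j : 'I_d) (v : 'rV[R]_d) : R := v 0 j.

Lemma row_coord_is_linear j : linear (row_coord j).
Proof. by move=> a u v; rewrite /row_coord !mxE. Qed.

HB.instance Definition _ j :=
  GRing.isLinear.Build R 'rV[R]_d R *:%R (row_coord j) (row_coord_is_linear j).

Lemma row_coord_continuous j : continuous (row_coord j).
Proof. exact: coord_continuous. Qed.

Lemma gradient_comp_row_coord (g : R -> R) (j : 'I_d) (x : 'rV[R]_d) (g' : R) :
  is_derive (x 0 j) 1 g g' ->
  differentiable (g \o row_coord j) x /\
  gradient (g \o row_coord j) x = g' *: ebasis R j.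
Proof.
move=> [/derivable1_diffP dg <-].
have dc : differentiable (row_coord j) x.
  exact/linear_differentiable/row_coord_continuous.
split; first exact: differentiable_comp.
apply/rowP => k; rewrite /gradient !mxE diff_comp //= diff_lin; last exact: row_coord_continuous.
by rewrite diff1E // derive1E /= /row_coord /ebasis mxE /= eq_sym mulrC.
Qed.

Lemma near_eq_gradient (f g : 'rV[R]_d -> R) (x : 'rV[R]_d) :
  (\forall z \near x, f z = g z) -> differentiable g x ->
  differentiable f x /\ gradient f x = gradient g x.
Proof.
move=> fg dg; have [df dfg] := near_eq_differentiable fg dg.
split; first exact: df.
by rewrite /gradient dfg.
Qed.

End CoordinateGradient.

Lemma is_derive_ln1p_expR_affine (R : realType) (a b t : R) :
  is_derive t 1 (fun u => ln (1 + expR (a * u + b)))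
    (a * expR (a * t + b) / (1 + expR (a * t + b))).
Proof.
have daff : is_derive t 1 (fun u => a * u + b) a.
  have -> : (fun u => a * u + b) = a \*: id + cst b by apply/funext.
  by apply: is_derive_eq; rewrite addr0 [_%:A]mulr1.
have dexp : is_derive t 1 (fun u => 1 + expR (a * u + b)) (expR (a * t + b) * a).
  have -> : (fun u => 1 + expR (a * u + b)) = cst 1 + expR \o (fun u => a * u + b).
    by apply/funext.
  by apply: is_derive_eq; rewrite add0r.
have pos : 0 < 1 + expR (a * t + b) by rewrite addr_gt0 ?expR_gt0.
have -> : (fun u => ln (1 + expR (a * u + b))) =
    (@ln R) \o (fun u => 1 + expR (a * u + b)) by [].
apply: is_derive_eq; first by apply: is_derive1_comp; exact: is_derive1_ln pos.
by rewrite mulrC [expR _ * a]mulrC.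
Qed.

Lemma mulr_logistic_neq0 (R : realType) (a s : R) :
  a != 0 -> a * expR s / (1 + expR s) != 0.
Proof.
move=> a_neq0; have E_gt0 := expR_gt0 s.
by rewrite mulf_neq0 ?invr_neq0 ?mulf_neq0 // gt_eqF // addr_gt0.
Qed.

Section Relu.
Variable R : realType.

Lemma ger0_relu (t : R) : 0 <= t -> relu t = t.
Proof. by move=> t0; apply/max_idPl. Qed.

Lemma ler0_relu (t : R) : t <= 0 -> relu t = 0.
Proof. by move=> t0; apply/max_idPr. Qed.

Lemma relu_pdiv (s t : R) : 0 < s -> relu (t / s) = relu t / s.
Proof.
move=> s0; have [t0|t0] := leP 0 t.
  by rewrite !ger0_relu // divr_ge0 // ltW.
have ts0 : t / s <= 0 by rewrite pmulr_lle0 ?invr_gt0 // ltW.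
by rewrite !ler0_relu ?mul0r // ltW.
Qed.

End Relu.

Section NeuronPairs.
Variables (R : realType) (d : nat).

Definition theta_pair_response (t : R) : R := relu (3 * t - 1) - relu (- 3 * t - 1).

Lemma inner_scale_ebasis (c : R) (i : 'I_d) (z : 'rV[R]_d) :
  inner (c *: ebasis R i) z = c * z 0 i.
Proof.
rewrite /inner (bigD1 i) //= big1 => [|k ki].
  by rewrite /ebasis !mxE !eqxx mulr1 addr0.
by rewrite /ebasis !mxE (negbTE ki) mulr0 mul0r.
Qed.

Lemma unit_neuron_theta_pair (i : 'I_d) (z : 'rV[R]_d) :
  unit_neuron (theta R i) z + unit_neuron (theta' R i) z =
  theta_pair_response (z 0 i) / (Num.sqrt 2 * Num.sqrt 20).
Proof.
have s20 : 0 < Num.sqrt (20 : R) by rewrite sqrtr_gt0; lra.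
rewrite /unit_neuron /= !inner_scale_ebasis.
have affine c : c / Num.sqrt 20 * z 0 i + -1 / Num.sqrt 20 = (c * z 0 i - 1) / Num.sqrt 20.
  by ring.
rewrite !affine !relu_pdiv // /theta_pair_response.
by rewrite invfM; ring.
Qed.

Lemma netout_nu_tilde (z : 'rV[R]_d) :
  netout (nu_tilde R d) z =
  \sum_(i <- half_idx d) theta_pair_response (z 0 i) / (d%:R * Num.sqrt 2 * Num.sqrt 20).
Proof.
rewrite /netout /nu_tilde big_flatten /= big_map; apply: eq_bigr => i _.
rewrite !big_cons big_nil addr0 -mulrDr unit_neuron_theta_pair.
by rewrite /= !invfM; ring.
Qed.

Lemma theta_pair_response_small (t : R) : `|t| < 1/3 -> theta_pair_response t = 0.
Proof.
rewrite ltr_norml => /andP[t_gt t_lt].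
by rewrite /theta_pair_response !ler0_relu ?subrr //; lra.
Qed.

Lemma theta_pair_response_near (y t : R) : y = 1 \/ y = -1 -> `|t - y| < 1/3 ->
  theta_pair_response t = 3 * t - y.
Proof.
rewrite ltr_distl /theta_pair_response => -[] -> /andP[t_gt t_lt].
- by rewrite ger0_relu 1?ler0_relu ?subr0 //; lra.
- by rewrite ler0_relu 1?ger0_relu //; lra.
Qed.

Lemma netout_nu_tilde_near (y : R) (j : 'I_d) (z : 'rV[R]_d) :
  y = 1 \/ y = -1 -> (j < d./2)%N ->
  (forall k, `|z 0 k - (y *: ebasis R j) 0 k| < 1/3) ->
  netout (nu_tilde R d) z = (3 * z 0 j - y) / (d%:R * Num.sqrt 2 * Num.sqrt 20).
Proof.
move=> hy hj near_x.
have j_in : j \in half_idx d by rewrite mem_filter hj mem_enum.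
have half_uniq : uniq (half_idx d) by rewrite filter_uniq // enum_uniq.
rewrite netout_nu_tilde (bigD1_seq j) //= big1_seq => [|i /andP[ij _]].
  have := near_x j; rewrite /ebasis !mxE !eqxx mulr1 => /theta_pair_response_near ->//.
  by rewrite addr0.
have := near_x i; rewrite /ebasis !mxE (negbTE ij) mulr0 subr0.
by move=> /theta_pair_response_small ->; rewrite mul0r.
Qed.

End NeuronPairs.

Theorem mainTheorem2 (R : realType) (d : nat) (hd2 : (2 <= d)%N) (hdeven : ~~ odd d)
  (y : R) (hy : y = 1 \/ y = -1) (j : 'I_d) (hj : (j < d./2)%N) :
  let x := y *: ebasis R j in
  exists c : R, c != 0 /\
    differentiable (fun z : 'rV[R]_d => ce_loss (nu_tilde R d) z y) x /\
    gradient (fun z : 'rV[R]_d => ce_loss (nu_tilde R d) z y) x = c *: ebasis R j.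
Proof.
(* Evenness of d is not needed: only the indices below d./2 are used. *)
move=> x; set D : R := d%:R * Num.sqrt 2 * Num.sqrt 20.
set a := - (3 * y / D); set b := y * y / D.
have D_gt0 : 0 < D by rewrite !mulr_gt0 ?sqrtr_gt0 ?ltr0n // ltnW.
have y_neq0 : y != 0 by case: hy => ->; rewrite ?oppr_eq0 oner_eq0.
have a_neq0 : a != 0 by rewrite oppr_eq0 !mulf_neq0 ?invr_eq0 ?(gt_eqF D_gt0) ?pnatr_eq0.
have loss_near : \forall z \near x, ce_loss (nu_tilde R d) z y =
    ((fun u => ln (1 + expR (a * u + b))) \o row_coord j) z.
  have := nbhsx_ballx x (1/3 : R) ltac:(lra).
  apply: filterS => z [_ x_z].
  rewrite /ce_loss (netout_nu_tilde_near hy hj) => [|k]; last by rewrite distrC; exact: x_z.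
  by rewrite /row_coord /a /b; congr (ln (1 + expR _)); ring.
have [dG gradG] := gradient_comp_row_coord (is_derive_ln1p_expR_affine a b (x 0 j)).
have [dL gradL] := near_eq_gradient loss_near dG.
exists (a * expR (a * x 0 j + b) / (1 + expR (a * x 0 j + b))); split.
  exact: mulr_logistic_neq0.
split; first exact: dL.
exact: etrans gradL gradG.
Qed.
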